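(* In $\mathsf{FOJT45}$: let $\mathcal{CS}$ be an axiomatically appropriate constant specification and $y$ an individual variable. For every finite set $X$ of individual variables with $y\notin X$, every formula $\varphi(y)$ and every justification term $t$, there is a justification term $\mathsf b(t)$ (built from $t$ using the operations of FOJT45) such that $\vdash_{\mathcal{CS}}\forall y\, t{:}_{Xy}\varphi(y)\to\mathsf b(t){:}_X\forall y\varphi(y)$.
   Context: Syntax of FOJT45: individual variables, predicate symbols, primitive connectives $\to,\bot,\forall$; justification variables $p_i$, constants $c_i$; terms $t::=p_i\mid c\mid (t\cdot t)\mid(t+t)\mid !t\mid ?t\mid\mathsf{gen}_x(t)$ (no primitive $\mathsf b$); formulas $Px_1\dots x_n\mid\bot\mid\varphi\to\varphi\mid\forall x\varphi\mid t{:}_X\varphi$ with $X$ a finite set of individual variables; free variables of $t{:}_X\psi$ are exactly those in $X$. $Xy$ denotes $X\cup\{y\}$ with $y\notin X$. Axioms of FOJT45: A1 classical first-order axioms; A2 $t{:}_{Xy}\varphi\to t{:}_X\varphi$ if $y$ not free in $\varphi$; A3 $t{:}_X\varphi\to t{:}_{Xy}\varphi$; B1 $t{:}_X\varphi\to\varphi$; B2 $t{:}_X(\varphi\to\psi)\to(s{:}_X\varphi\to[t\cdot s]{:}_X\psi)$; B3 $t{:}_X\varphi\to[t+s]{:}_X\varphi$, $s{:}_X\varphi\to[t+s]{:}_X\varphi$; B4 $t{:}_X\varphi\to!t{:}_Xt{:}_X\varphi$; B5 $t{:}_X\varphi\to\mathsf{gen}_x(t){:}_X\forall x\varphi$ if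 $x\notin X$; B6 $\neg t{:}_X\varphi\to ?t{:}_X\neg t{:}_X\varphi$; rules modus ponens and generalization. A constant specification is a set of $c{:}\psi$ with $\psi$ an axiom; axiomatically appropriate if each axiom has some constant; $\vdash_{\mathcal{CS}}$ is provability with $\mathcal{CS}$ added as axioms. *)

From HB Require Import structures.
From mathcomp Require Import all_boot.
Set Implicit Arguments. Unset Strict Implicit. Unset Printing Implicit Defensive.

(* Individual variables are natural numbers.
   Finite sets of individual variables: strictly increasing lists
   (a canonical representation, so Leibniz equality = set equality). *)
Record vset := VSet { vs : seq nat; vs_sorted : sorted ltn vs }.

Lemma sorted_vnorm (s : seq nat) : sorted ltn (sort leq (undup s)).
Proof.
rewrite ltn_sorted_uniq_leq sort_uniq undup_uniq /=.
exact: (sort_sorted leq_total).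
Qed.

Definition vnorm (s : seq nat) : vset := VSet (sorted_vnorm s).
Definition vempty : vset := vnorm [::].
Definition vadd (y : nat) (X : vset) : vset := vnorm (y :: vs X).
Definition vreplace (x z : nat) (X : vset) : vset :=
  vnorm (map (fun v => if v == x then z else v) (vs X)).

Inductive jterm : Type :=
| JVar of nat
| JConst of nat
| JApp of jterm & jterm
| JSum of jterm & jterm
| JBang of jterm
| JQue of jterm
| JGen of nat & jterm.

Inductive formula : Type :=
| FPred of nat & seq nat
| FBot
| FImp of formula & formula
| FAll of nat & formula
| FJust of jterm & vset & formula.

Definition FNeg (f : formula) : formula := FImp f FBot.

(* x is free in f; the free variables of t:_X ψ are exactly those of X *)
Fixpoint free (x : nat) (f : formula) : bool :=
  match f with
  | FPred _ xs => x \in xs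
  | FBot => false
  | FImp a b => free x a || free x b
  | FAll w a => (x != w) && free x a
  | FJust _ X _ => x \in vs X
  end.

Fixpoint subst (x z : nat) (f : formula) : formula :=
  match f with
  | FPred P xs => FPred P (map (fun v => if v == x then z else v) xs)
  | FBot => FBot
  | FImp a b => FImp (subst x z a) (subst x z b)
  | FAll w a => if w == x then FAll w a else FAll w (subst x z a)
  | FJust t X a =>
      if x \in vs X then FJust t (vreplace x z X) (subst x z a) else f
  end.

Fixpoint free_for (z x : nat) (f : formula) : bool :=
  match f with
  | FPred _ _ => true
  | FBot => true
  | FImp a b => free_for z x a && free_for z x b
  | FAll w a => ~~ free x (FAll w a) || ((w != z) && free_for z x a)
  | FJust _ X a => (x \notin vs X) || free_for z x a
  end.

Inductive IsAxiom : formula -> Prop :=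
| AxK a b : IsAxiom (FImp a (FImp b a))
| AxS a b c : IsAxiom (FImp (FImp a (FImp b c)) (FImp (FImp a b) (FImp a c)))
| AxDN a : IsAxiom (FImp (FNeg (FNeg a)) a)
| AxInst x z a : free_for z x a -> IsAxiom (FImp (FAll x a) (subst x z a))
| AxAllImp x a b : ~~ free x a ->
    IsAxiom (FImp (FAll x (FImp a b)) (FImp a (FAll x b)))
| AxA2 t X y a : y \notin vs X -> ~~ free y a ->
    IsAxiom (FImp (FJust t (vadd y X) a) (FJust t X a))
| AxA3 t X y a : y \notin vs X ->
    IsAxiom (FImp (FJust t X a) (FJust t (vadd y X) a))
| AxB1 t X a : IsAxiom (FImp (FJust t X a) a)
| AxB2 t s X a b :
    IsAxiom (FImp (FJust t X (FImp a b)) (FImp (FJust s X a) (FJust (JApp t s) X b)))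
| AxB3l t s X a : IsAxiom (FImp (FJust t X a) (FJust (JSum t s) X a))
| AxB3r t s X a : IsAxiom (FImp (FJust s X a) (FJust (JSum t s) X a))
| AxB4 t X a : IsAxiom (FImp (FJust t X a) (FJust (JBang t) X (FJust t X a)))
| AxB5 t X x a : x \notin vs X ->
    IsAxiom (FImp (FJust t X a) (FJust (JGen x t) X (FAll x a)))
| AxB6 t X a :
    IsAxiom (FImp (FNeg (FJust t X a)) (FJust (JQue t) X (FNeg (FJust t X a)))).

(* A constant specification: CS c ψ means  c:ψ ∈ CS  (with c:ψ read as c:_∅ ψ);
   every member must have ψ an axiom. *)
Definition const_spec (CS : nat -> formula -> Prop) : Prop :=
  forall c f, CS c f -> IsAxiom f.

Definition axiomatically_appropriate (CS : nat -> formula -> Prop) : Prop :=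
  forall f, IsAxiom f -> exists c, CS c f.

Inductive prv (CS : nat -> formula -> Prop) : formula -> Prop :=
| PAx f : IsAxiom f -> prv CS f
| PCS c f : CS c f -> prv CS (FJust (JConst c) vempty f)
| PMP a b : prv CS (FImp a b) -> prv CS a -> prv CS b
| PGen x a : prv CS a -> prv CS (FAll x a).

(* s occurs in t (t is built from s using term operations) *)
Fixpoint jsub (s t : jterm) : Prop :=
  s = t \/
  match t with
  | JApp a b | JSum a b => jsub s a \/ jsub s b
  | JBang a | JQue a | JGen _ a => jsub s a
  | _ => False
  end.

(* The term is b(t) = q·?(c·?t).  Write A for ∀y t:_{Xy}φ.  Since A → t:_{Xy}φ,
   negative introspection (B6) and internalization give ¬t:_{Xy}φ → (c·?t):_{Xy}¬A,
   and A2 drops y, which is not free in ¬A.  With B1 this yields ¬φ → R for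
   R := (c·?t):_X ¬A, hence ¬R → φ and, y not being free in R, ¬R → ∀yφ.  A second
   round of introspection and internalization turns this into
   ¬R → (q·?(c·?t)):_X ∀yφ, and A → ¬R is an instance of B1. *)
From mathcomp Require Import all_boot.

Set Implicit Arguments.

Lemma vset_eq (X1 X2 : vset) : vs X1 =i vs X2 -> X1 = X2.
Proof.
case: X1 X2 => s1 h1 [s2 h2] /= e.
have es : s1 = s2 by apply: (irr_sorted_eq ltn_trans ltnn).
by subst; congr VSet; apply: bool_irrelevance.
Qed.

Lemma mem_vnorm (s : seq nat) z : (z \in vs (vnorm s)) = (z \in s).
Proof. by rewrite /= mem_sort mem_undup. Qed.

Lemma vnormK (X : vset) : vnorm (vs X) = X.
Proof. by apply: vset_eq => z; rewrite mem_vnorm. Qed.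

Lemma subst_id x f : subst x x f = f.
Proof.
have map_id_subst s : map (fun v => if v == x then x else v) s = s.
  by rewrite -[RHS]map_id; apply: eq_map => v; case: eqP => // ->.
elim: f => //=.
- by move=> p xs; rewrite map_id_subst.
- by move=> a -> b ->.
- by move=> w a ->; case: ifP.
- by move=> t X a ->; case: ifP => // _; rewrite /vreplace map_id_subst vnormK.
Qed.

Lemma free_for_id x f : free_for x x f.
Proof.
elim: f => //=.
- by move=> a -> b ->.
- by move=> w a ->; case: (eqVneq x w); rewrite ?orbT.
- by move=> t X a ->; rewrite orbT.
Qed.

Lemma jsub_refl (t : jterm) : jsub t t.
Proof. by case: t => *; left. Qed.

Section Derivations.
Variable CS : nat -> formula -> Prop.
Local Notation P := (prv CS).

Lemma imp_trans a b c : P (FImp a b) -> P (FImp b c) -> P (FImp a c).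
Proof.
move=> hab hbc.
exact: PMP (PMP (PAx _ (AxS a b c)) (PMP (PAx _ (AxK _ _)) hbc)) hab.
Qed.

Lemma imp_swap a b c : P (FImp a (FImp b c)) -> P (FImp b (FImp a c)).
Proof.
move=> h; apply: imp_trans (PAx _ (AxK b a)) _.
exact: PMP (PAx _ (AxS a b c)) h.
Qed.

Lemma contra a b : P (FImp a b) -> P (FImp (FNeg b) (FNeg a)).
Proof.
move=> hab.
have h : P (FImp (FImp b FBot) (FImp (FImp a b) (FImp a FBot))).
  exact: imp_trans (PAx _ (AxK (FImp b FBot) a)) (PAx _ (AxS a b FBot)).
exact: PMP (imp_swap h) hab.
Qed.

Lemma contra_negl a b : P (FImp (FNeg a) b) -> P (FImp (FNeg b) a).
Proof. by move=> h; apply: imp_trans (contra h) (PAx _ (AxDN a)). Qed.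

Lemma all_inst x f : P (FImp (FAll x f) f).
Proof. by have := PAx CS (AxInst (free_for_id x f)); rewrite subst_id. Qed.

Lemma imp_all x a b : ~~ free x a -> P (FImp a b) -> P (FImp a (FAll x b)).
Proof. by move=> hx h; apply: PMP (PGen x h); apply/PAx/AxAllImp. Qed.

Lemma just_vadd q X y f :
  y \notin vs X -> P (FJust q X f) -> P (FJust q (vadd y X) f).
Proof. by move=> hy; apply: PMP; apply/PAx/AxA3. Qed.

Lemma just_weaken_empty q X f : P (FJust q vempty f) -> P (FJust q X f).
Proof.
move=> h; rewrite -(vnormK X); elim: (vs X) => [|x s IH] //.
have [xs|xs] := boolP (x \in s).
  suff -> : vnorm (x :: s) = vnorm s by [].
  by apply: vset_eq => z; rewrite !mem_vnorm in_cons; case: eqP => // ->.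
suff -> : vnorm (x :: s) = vadd x (vnorm s) by apply: just_vadd; rewrite ?mem_vnorm.
by apply: vset_eq => z; rewrite /vadd !mem_vnorm !in_cons mem_vnorm.
Qed.

Hypothesis CS_appropriate : axiomatically_appropriate CS.

Lemma internalize f : P f -> exists q, P (FJust q vempty f).
Proof.
elim=> {f}.
- by move=> f /CS_appropriate [c hc]; exists (JConst c); apply: PCS.
- by move=> c f hc; exists (JBang (JConst c)); apply: PMP (PAx _ (AxB4 _ _ _)) (PCS hc).
- move=> a b _ [q1 h1] _ [q2 h2]; exists (JApp q1 q2).
  exact: PMP (PMP (PAx _ (AxB2 _ _ _ _ _)) h1) h2.
- by move=> x a _ [q h]; exists (JGen x q); apply: PMP (PAx _ (AxB5 _ _ _)) h.
Qed.

Lemma neg_just_internalize r X a b :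
  P (FImp (FNeg (FJust r X a)) b) ->
  exists q, P (FImp (FNeg (FJust r X a)) (FJust (JApp q (JQue r)) X b)).
Proof.
move=> /internalize [q hq]; exists q.
apply: imp_trans (PAx _ (AxB6 r X a)) _.
exact: PMP (PAx _ (AxB2 _ _ _ _ _)) (just_weaken_empty X hq).
Qed.

Lemma neg_imp_just_neg_all X y t phi : y \notin vs X ->
  exists c, P (FImp (FNeg phi)
    (FJust (JApp c (JQue t)) X (FNeg (FAll y (FJust t (vadd y X) phi))))).
Proof.
move=> hy; set T := FJust t (vadd y X) phi.
have [c hc] := neg_just_internalize (contra (all_inst y T)).
exists c; apply: imp_trans (contra (PAx _ (AxB1 t _ phi))) _.
apply: imp_trans hc _.
by apply/PAx/AxA2 => //=; rewrite eqxx.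
Qed.

End Derivations.

Theorem mainTheorem6 (CS : nat -> formula -> Prop) (y : nat) :
  const_spec CS -> axiomatically_appropriate CS ->
  forall (X : vset) (phi : formula) (t : jterm),
    y \notin vs X ->
    exists b : jterm, jsub t b /\
      prv CS (FImp (FAll y (FJust t (vadd y X) phi))
                   (FJust b X (FAll y phi))).
Proof.
move=> _ app X phi t hyX.
set A := FAll y (FJust t (vadd y X) phi).
have [c hc] := neg_imp_just_neg_all app X y t phi hyX.
set r := JApp c (JQue t); set R := FJust r X (FNeg A).
have hR : prv CS (FImp (FNeg R) (FAll y phi)).
  by apply: imp_all (contra_negl hc); rewrite /= orbF.
have [q hq] := neg_just_internalize app hR.
exists (JApp q (JQue r)); split; first by rewrite /=; have := jsub_refl t; tauto.
exact: imp_trans (imp_swap (PAx _ (AxB1 r X (FNeg A)))) hq.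
Qed.
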